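(* Let $k\in\mathbb N^+$ and let $G=(V,E)$ be a graph without isolated vertices. If $G$ contains an independent set of size $(k-1)^2+1$, then $G$ has a $k$-edge induced subgraph.
   Context: All graphs are simple (finite, nonempty vertex set, undirected, no loops or multiple edges). A vertex is isolated if it has degree $0$. A $k$-edge induced subgraph of $G$ is an induced subgraph $G[S]$ ($S\neq\emptyset$) with exactly $k$ edges. *)

From mathcomp Require Import all_boot.
Set Implicit Arguments. Unset Strict Implicit. Unset Printing Implicit Defensive.

Definition simple_graph (T : finType) (e : rel T) : Prop :=
  symmetric e /\ irreflexive e.

Definition isolated (T : finType) (e : rel T) (x : T) : bool :=
  [forall y, ~~ e x y].

Definition independent (T : finType) (e : rel T) (S : {set T}) : bool :=
  [forall x in S, forall y in S, ~~ e x y].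

Definition induced_edges (T : finType) (e : rel T) (S : {set T}) : {set {set T}} :=
  [set E : {set T} | (E \subset S) && [exists x, exists y, e x y && (E == [set x; y])]].

Definition num_induced_edges (T : finType) (e : rel T) (S : {set T}) : nat :=
  #|induced_edges e S|.

From mathcomp Require Import all_boot.
Set Implicit Arguments. Unset Strict Implicit. Unset Printing Implicit Defensive.

(* Let U be a minimal set dominating the independent set I, so that every
   u in U has a private neighbour in I, adjacent to no other vertex of U.
   Since I is independent, adding to W vertices of I outside W that have a
   single neighbour in W adds exactly one edge each. If some u in U has at
   least k neighbours in I, add k of them to [set u]. Otherwise
   |I| <= |U| (k - 1) forces |U| >= k; a minimal W in U with
   k <= e(W) + |W| has e(W) <= k, and adding k - e(W) private neighbours of
   vertices of W yields exactly k edges. *)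

Lemma exists_subset_card (T : finType) (A : {set T}) m :
  m <= #|A| -> exists2 J : {set T}, J \subset A & #|J| = m.
Proof.
move=> mA; exists [set x in take m (enum A)].
  by apply/subsetP=> x; rewrite inE => /mem_take; rewrite mem_enum.
rewrite cardsE; have /card_uniqP -> := take_uniq m (enum_uniq (mem A)).
by rewrite size_take -cardE ltn_neqAle mA andbT; case: eqP.
Qed.

Section InducedEdges.
Variables (T : finType) (e : rel T).
Hypotheses (e_sym : symmetric e) (e_irr : irreflexive e).

Local Notation nedges := (num_induced_edges e).

Definition nbrs_in (S : {set T}) (x : T) : {set T} := [set y in S | e x y].

Lemma num_induced_edges0 : nedges set0 = 0.
Proof.
apply/eqP; rewrite cards_eq0; apply/eqP/setP=> E; rewrite !inE.
apply/negbTE/negP=> /andP[sub /existsP[x /existsP[y /andP[_ /eqP defE]]]].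
have : x \in E by rewrite defE !inE eqxx.
by move/(subsetP sub); rewrite inE.
Qed.

Lemma induced_edges_setU1 x (S : {set T}) : x \notin S ->
  induced_edges e (x |: S) =
  induced_edges e S :|: [set [set x; y] | y in nbrs_in S x].
Proof.
move=> xS; apply/setP=> E; rewrite !inE; apply/idP/idP.
- case/andP=> sub /existsP[a /existsP[b /andP[eab /eqP defE]]].
  have inS z : z \in E -> z != x -> z \in S.
    by move=> /(subsetP sub); rewrite !inE => /orP[/eqP->|]; rewrite ?eqxx.
  have ne_ab : a != b by apply: contraTneq eab => ->; rewrite e_irr.
  case: (boolP (x \in E)) => xE; last first.
    apply/orP; left; apply/andP; split.
      by apply/subsetP=> z zE; rewrite inS //; apply: contraNneq xE => <-.
    by apply/existsP; exists a; apply/existsP; exists b; rewrite eab defE eqxx.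
  apply/orP; right; apply/imsetP.
  have [xa|xb] : x = a \/ x = b by apply/set2P; rewrite -defE.
    subst a; exists b; last by [].
    by rewrite inE eab andbT inS 1?eq_sym // defE !inE eqxx orbT.
  subst b; exists a; last by rewrite defE setUC.
  by rewrite inE e_sym eab andbT inS // defE !inE eqxx.
- case/orP=> [/andP[sub edgeE]|/imsetP[y]].
    by rewrite edgeE andbT (subset_trans sub) // subsetUr.
  rewrite inE => /andP[yS exy] ->; apply/andP; split.
    by rewrite subUset !sub1set !inE eqxx yS orbT.
  by apply/existsP; exists x; apply/existsP; exists y; rewrite exy eqxx.
Qed.

Lemma num_induced_edges_setU1 x (S : {set T}) : x \notin S ->
  nedges (x |: S) = nedges S + #|nbrs_in S x|.
Proof.
move=> xS; rewrite /num_induced_edges induced_edges_setU1 //.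
have disj : [disjoint induced_edges e S & [set [set x; y] | y in nbrs_in S x]].
  rewrite -setI_eq0; apply/eqP/setP=> E; rewrite !inE.
  apply/negbTE/negP=> /andP[/andP[sub _] /imsetP[y _ defE]].
  by move: (subsetP sub x); rewrite defE !inE eqxx (negbTE xS) => /(_ isT).
have [_] := leq_card_setU (induced_edges e S)
  [set [set x; y] | y in nbrs_in S x].
rewrite disj => /eqP ->; congr (_ + _); apply: card_in_imset.
move=> y1 y2; rewrite !inE => /andP[y1S _] _ eq12.
have : y1 \in [set x; y2] by rewrite -eq12 !inE eqxx orbT.
by rewrite !inE => /orP[/eqP ex|/eqP //]; rewrite -ex y1S in xS.
Qed.

Lemma num_induced_edges_set1 u : nedges [set u] = 0.
Proof.
rewrite -(setU0 [set u]) num_induced_edges_setU1 ?inE // num_induced_edges0.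
by apply/eqP; rewrite cards_eq0; apply/eqP/setP=> y; rewrite !inE.
Qed.

Lemma exists_num_induced_edges_window (U : {set T}) k : k <= #|U| ->
  exists2 W : {set T}, W \subset U & nedges W <= k <= nedges W + #|W|.
Proof.
move=> kU.
pose P (W : {set T}) := (W \subset U) && (k <= nedges W + #|W|).
have PU : P U by rewrite /P subxx (leq_trans kU) ?leq_addl.
have [W /minsetP[/andP[WU kW] minW] _] := minset_exists PU.
exists W; rewrite // kW andbT.
have [->|[w wW]] := set_0Vmem W; first by rewrite num_induced_edges0.
have notP : ~~ P (W :\ w).
  apply: contraTN wW => /minW/(_ (subD1set _ _)) <-.
  by rewrite !inE eqxx.
rewrite /P (subset_trans (subD1set _ _) WU) -ltnNge /= in notP.
rewrite -(setD1K wW) num_induced_edges_setU1 ?setD11 //.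
apply/ltnW/(leq_trans _ notP); rewrite ltnS leq_add2l.
by apply/subset_leq_card/subsetP=> y; rewrite inE => /andP[].
Qed.

Section Independent.
Variable I : {set T}.
Hypothesis indI : independent e I.

Lemma independent_nedge x y : x \in I -> y \in I -> ~~ e x y.
Proof. by move=> xI yI; move/forall_inP/(_ x xI)/forall_inP: indI; apply. Qed.

Definition pendant (W : {set T}) : {set T} :=
  [set j in I :\: W | #|nbrs_in W j| == 1].

Lemma num_induced_edges_setU_pendant W (J : {set T}) : J \subset pendant W ->
  nedges (W :|: J) = nedges W + #|J|.
Proof.
elim: {J}_.+1 {-2}J (ltnSn #|J|) => // m IH J Jm JW.
have [->|[j jJ]] := set_0Vmem J; first by rewrite setU0 cards0 addn0.
have := subsetP JW j jJ; rewrite !inE => /andP[/andP[jW jI] /eqP nbrs1].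
rewrite -(setD1K jJ) setUCA num_induced_edges_setU1; last first.
  by rewrite !inE negb_or jW eqxx.
rewrite IH ?(subset_trans (subD1set _ _)) //; last first.
  by rewrite -ltnS (cardsD1 j J) jJ in Jm.
suff -> : nbrs_in (W :|: J :\ j) j = nbrs_in W j.
  by rewrite nbrs1 cardsU1 setD11 addn1 addnS.
apply/setP=> y; rewrite !inE; case: (boolP (y \in W)) => //= _.
apply/negbTE/andP=> [[/andP[_ yJ]]]; apply/negP.
have := subsetP JW y yJ; rewrite !inE => /andP[/andP[_ yI] _].
exact: independent_nedge.
Qed.

Lemma induced_subgraph_from_window W k : 0 < k ->
  nedges W <= k <= nedges W + #|pendant W| ->
  exists S : {set T}, S != set0 /\ nedges S = k.
Proof.
move=> k_gt0 /andP[lekW lek]; rewrite -leq_subLR in lek.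
have [J JW cardJ] := exists_subset_card lek.
exists (W :|: J); rewrite num_induced_edges_setU_pendant // cardJ subnKC //.
split=> //; apply: contraTneq k_gt0 => S0.
by rewrite -(subnKC lekW) -cardJ -num_induced_edges_setU_pendant // S0
  num_induced_edges0.
Qed.

Lemma pendant_set1 u : pendant [set u] = [set j in I | e j u].
Proof.
apply/setP=> j; rewrite !inE.
have -> : nbrs_in [set u] j = if e j u then [set u] else set0.
  apply/setP=> y; rewrite !inE.
  case: (eqVneq y u) => [->|/negbTE yu]; case: (e j u);
    by rewrite ?inE ?eqxx ?yu.
case: (boolP (e j u)) => [eju|_]; last by rewrite cards0 /= !andbF.
have ju : j != u by apply: contraTneq eju => ->; rewrite e_irr.
by rewrite cards1 ju !andbT.
Qed.

Lemma card_pendant_ge (W : {set T}) :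
  (forall w, w \in W -> exists2 j, j \in I :\: W & nbrs_in W j = [set w]) ->
  #|W| <= #|pendant W|.
Proof.
move=> priv; pose f j := odflt j [pick y in W | e j y].
apply: leq_trans (leq_imset_card f _); apply/subset_leq_card/subsetP=> w wW.
have [j jIW nbrsj] := priv w wW.
apply/imsetP; exists j; first by rewrite inE jIW nbrsj cards1.
move/setP: nbrsj => nbrsj; rewrite /f; case: pickP => [y yN|/(_ w)].
  by move: (nbrsj y); rewrite !inE yN => /esym/eqP.
by move: (nbrsj w); rewrite !inE eqxx => ->.
Qed.

Definition dominates (U : {set T}) : bool :=
  [forall j in I, [exists u in U, e j u]].

Lemma card_dominated_le (U : {set T}) m : dominates U ->
  (forall u, u \in U -> #|[set j in I | e j u]| <= m) -> #|I| <= #|U| * m.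
Proof.
move=> /forall_inP domU le_m.
have : I \subset \bigcup_(u in U) [set j in I | e j u].
  apply/subsetP=> j jI; have /exists_inP[u uU eju] := domU j jI.
  by apply/bigcupP; exists u; rewrite // inE jI.
move/subset_leq_card/leq_trans; apply; rewrite -sum_nat_const.
elim/big_ind2: _ => [|X1 n1 X2 n2 le1 le2|u uU]; rewrite ?cards0 ?le_m //.
exact: leq_trans (leq_card_setU _ _) (leq_add le1 le2).
Qed.

Lemma minimal_dominates_unique_nbr (U : {set T}) u :
  minset dominates U -> u \in U -> exists2 j, j \in I & nbrs_in U j = [set u].
Proof.
move=> /minsetP[domU minU] uU.
have /forall_inPn[j jI /exists_inPn nbrsj] : ~~ dominates (U :\ u).
  by apply: contraTN uU => /minU/(_ (subD1set _ _)) <-; rewrite !inE eqxx.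
exists j => //; apply/setP=> y; rewrite !inE.
case: eqP => [->|/eqP yu]; last first.
  by apply/negbTE/andP=> [[yU]]; apply/negP/nbrsj; rewrite !inE yu yU.
rewrite uU /=; have /exists_inP[v vU ejv] := forall_inP domU j jI.
case: (eqVneq v u) ejv => [<- //|vu ejv].
by have := nbrsj v; rewrite !inE vu vU ejv => /(_ isT).
Qed.

Lemma minimal_dominates_private (U : {set T}) u :
  minset dominates U -> u \in U ->
  exists2 j, j \in I :\: U & nbrs_in U j = [set u].
Proof.
move=> minU uU; have [j jI nbrsj] := minimal_dominates_unique_nbr minU uU.
exists j => //; rewrite inE jI andbT; apply/negP=> jU.
have [i iI /setP/(_ j)] := minimal_dominates_unique_nbr minU jU.
by rewrite !inE eqxx jU => /andP[_]; apply/negP/independent_nedge.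
Qed.

End Independent.
End InducedEdges.

Theorem lemma3p9 (T : finType) (e : rel T) (k : nat) :
  0 < k ->
  simple_graph e ->
  (forall x : T, ~~ isolated e x) ->
  (exists I : {set T}, independent e I /\ #|I| = (k - 1) ^ 2 + 1) ->
  exists S : {set T}, S != set0 /\ num_induced_edges e S = k.
Proof.
move=> k_gt0 [e_sym e_irr] no_isolated [I [indI cardI]].
have window W := induced_subgraph_from_window e_sym e_irr indI (W := W) k_gt0.
have domT : dominates e I [set: T].
  apply/forall_inP=> j _; have /forallPn[y /negbNE ejy] := no_isolated j.
  by apply/exists_inP; exists y.
have [U minU _] := minset_exists domT.
have [/exists_inP[u _ ku] | /exists_inPn few_nbrs] :=
  boolP [exists u in U, k <= #|[set j in I | e j u]|].
  apply: (window [set u]).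
  by rewrite (pendant_set1 e_irr) (num_induced_edges_set1 e_sym e_irr).
have kU : k <= #|U|.
  have leI : #|I| <= #|U| * k.-1.
    apply: card_dominated_le (minsetP minU).1 _ => u uU.
    by rewrite -ltnS prednK // ltnNge few_nbrs.
  apply: contraLR leI; rewrite -!ltnNge cardI subn1 addn1 ltnS -mulnn leq_mul2r.
  by move=> ltUk; rewrite -ltnS prednK // ltUk orbT.
have [W WU /andP[lekW le_k]] :=
  exists_num_induced_edges_window e_sym e_irr kU.
apply: (window W); rewrite lekW (leq_trans le_k) // leq_add2l.
apply: card_pendant_ge => w wW.
have [j jIU nbrsj] := minimal_dominates_private indI minU (subsetP WU w wW).
exists j; first exact: subsetP (setDS I WU) j jIU.
apply/setP=> y; move/setP/(_ y): nbrsj; rewrite !inE.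
case: (eqVneq y w) => [->|_]; first by rewrite wW => /andP[].
by move/negbT; apply: contraNF => /andP[/(subsetP WU) -> ->].
Qed.
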